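(* Every IC and IR mechanism that is not floor-randomized is dominated by a floor-randomized mechanism.
   Context: Setting. Let $\Theta=[\underline\theta,\overline\theta]$ with $0<\underline\theta<\overline\theta$. Let $c>0$ and let $P:\mathbb R_+\to\mathbb R_+$ be continuous and strictly decreasing with $P(\overline q)=0$ for some $\overline q>0$. Put $V(q)=\int_0^q P(z)\,dz$ and $\mathrm{TS}(\theta,q)=V(q)-c-\theta q$ for $q>0$, $\mathrm{TS}(\theta,0)=0$. Assume (A2): $\mathrm{TS}(\overline\theta,P^{-1}(\overline\theta))>0$. A mechanism is a triple $M=(r,q,u)$ of functions $r:\Theta\to[0,1]$, $q:\Theta\to[0,\overline q]$, $u:\Theta\to\mathbb R$ with $q(\theta)=0$ if and only if $r(\theta)=0$. It is IC if $u(\theta)\ge u(\theta')+(\theta'-\theta)q(\theta')r(\theta')$ for all $\theta,\theta'\in\Theta$, and IR if $u(\theta)\ge 0$ for all $\theta$. (Known fact: $M$ is IC iff $\theta\mapsto q(\theta)r(\theta)$ is nonincreasing and $u(\theta)=u(\overline\theta)+\int_\theta^{\overline\theta}q(z)r(z)\,dz$ for all $\theta$; an IC mechanism is IR iff $u(\overline\theta)\ge0$.) Fix $\alpha\in[0,1)$. The regulator's surplus at $\theta$ is $\mathrm{RS}_\alpha(\theta,M)=r(\theta)\,\mathrm{TS}(\theta,q(\theta))-(1-\alpha)u(\theta)$. An IC and IR mechanism $\tilde M$ dominates an IC and IR mechanism $M$ if $\mathrm{RS}_\alpha(\theta,\tilde M)\ge \mathrm{RS}_\alpha(\theta,M)$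 for all $\theta\in\Theta$ with strict inequality for some $\theta$; $M$ is undominated if it is IC, IR and not dominated by any IC and IR mechanism. The quantity floor $\hat q$ is the unique $q>0$ with $V(q)-qP(q)=c$. A mechanism $(r,q,u)$ is floor-randomized if it is IC, IR, $u(\overline\theta)=0$, and $\Theta$ can be partitioned into three pairwise disjoint (possibly empty) intervals $\Theta_1,\Theta_{01},\Theta_0$, with every element of $\Theta_0$ larger than every element of $\Theta_{01}$ and every element of $\Theta_{01}$ larger than every element of $\Theta_1$, such that: $q(\theta)\ge\hat q$ and $r(\theta)=1$ for $\theta\in\Theta_1$; $q(\theta)=\hat q$ and $r(\theta)\in(0,1)$ for $\theta\in\Theta_{01}$; $q(\theta)=r(\theta)=0$ for $\theta\in\Theta_0$. *)

From Stdlib Require Import Reals.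
From Coquelicot Require Import Coquelicot.
Open Scope R_scope.

Definition V (P : R -> R) (q : R) : R := RInt P 0 q.

Definition TS (P : R -> R) (c theta q : R) : R :=
  if Rle_dec q 0 then 0 else V P q - c - theta * q.

Definition inTheta (thl thh th : R) : Prop := thl <= th <= thh.

Definition is_mechanism (thl thh qbar : R) (r q u : R -> R) : Prop :=
  forall th, inTheta thl thh th ->
    0 <= r th <= 1 /\ 0 <= q th <= qbar /\ (q th = 0 <-> r th = 0).

Definition IC (thl thh : R) (r q u : R -> R) : Prop :=
  forall th th', inTheta thl thh th -> inTheta thl thh th' ->
    u th >= u th' + (th' - th) * q th' * r th'.

Definition IR (thl thh : R) (u : R -> R) : Prop :=
  forall th, inTheta thl thh th -> u th >= 0.

Definition IC_IR (thl thh qbar : R) (r q u : R -> R) : Prop :=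
  is_mechanism thl thh qbar r q u /\ IC thl thh r q u /\ IR thl thh u.

Definition RS (P : R -> R) (c alpha th : R) (r q u : R -> R) : R :=
  r th * TS P c th (q th) - (1 - alpha) * u th.

Definition dominates (P : R -> R) (c alpha thl thh qbar : R)
    (r' q' u' r q u : R -> R) : Prop :=
  IC_IR thl thh qbar r' q' u' /\ IC_IR thl thh qbar r q u /\
  (forall th, inTheta thl thh th ->
     RS P c alpha th r' q' u' >= RS P c alpha th r q u) /\
  (exists th, inTheta thl thh th /\
     RS P c alpha th r' q' u' > RS P c alpha th r q u).

Definition is_quantity_floor (P : R -> R) (c qhat : R) : Prop :=
  0 < qhat /\ V P qhat - qhat * P qhat = c /\
  (forall q, 0 < q -> V P q - q * P q = c -> q = qhat).

Definition is_interval (S : R -> Prop) : Prop :=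
  forall x y z, S x -> S y -> x <= z <= y -> S z.

Definition floor_randomized (thl thh qbar qhat : R) (r q u : R -> R) : Prop :=
  IC_IR thl thh qbar r q u /\ u thh = 0 /\
  exists S1 S01 S0 : R -> Prop,
    is_interval S1 /\ is_interval S01 /\ is_interval S0 /\
    (forall th, S1 th \/ S01 th \/ S0 th -> inTheta thl thh th) /\
    (forall th, inTheta thl thh th -> S1 th \/ S01 th \/ S0 th) /\
    (forall th, ~ (S1 th /\ S01 th)) /\
    (forall th, ~ (S1 th /\ S0 th)) /\
    (forall th, ~ (S01 th /\ S0 th)) /\
    (forall x y, S0 x -> S01 y -> y < x) /\
    (forall x y, S01 x -> S1 y -> y < x) /\
    (forall th, S1 th -> q th >= qhat /\ r th = 1) /\
    (forall th, S01 th -> q th = qhat /\ 0 < r th < 1) /\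
    (forall th, S0 th -> q th = 0 /\ r th = 0).

From Stdlib Require Import Reals Lra Classical.
From Coquelicot Require Import Coquelicot.
Open Scope R_scope.

(* Incentive compatibility only constrains the expected quantity x(th) = q(th) r(th), which
   must be nonincreasing, and determines the rent u from x up to the constant u(thh); keeping x
   and lowering u by u(thh) preserves IC and IR.  For a fixed x the regulator's surplus from a
   lottery (r, q) with q r = x is x (V(q) - c) / q - th x, so the best lottery maximizes the
   average net value (V(q) - c) / q over q >= x.  Its derivative has the sign of
   c - (V(q) - q P(q)), and V(q) - q P(q) increases through c at the floor qhat, so the optimum
   is qhat with probability x / qhat when x < qhat and x for sure otherwise.  The resulting
   mechanism is floor-randomized, weakly better at every type, and strictly better somewhere
   unless the original one already was floor-randomized. *)

Lemma Rmax_0_continuous (x : R) : continuous (fun y => Rmax y 0) x.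
Proof.
  apply continuity_pt_filterlim, continuity_pt_locally; intros eps.
  exists eps; intros y Hy; change (Rabs (y - x) < eps) in Hy.
  unfold Rmax; destruct (Rle_dec y 0); destruct (Rle_dec x 0);
    unfold Rabs in *; repeat destruct Rcase_abs; lra.
Qed.

Section ValueFunction.

Variable P : R -> R.
Hypothesis HPcont : forall x, 0 <= x ->
  filterlim P (within (fun y => 0 <= y) (locally x)) (locally (P x)).

(* [P] is only continuous on [0, +oo); extended by [P 0] to the left it is continuous
   everywhere, which the integral and IVT lemmas of Coquelicot require. *)
Definition P_ext (y : R) : R := P (Rmax y 0).

Lemma P_ext_continuous (x : R) : continuous P_ext x.
Proof.
  apply (filterlim_comp _ _ _ _ P _ (within (fun y => 0 <= y) (locally (Rmax x 0)))).
  - intros Q HQ. apply (Rmax_0_continuous x) in HQ. unfold filtermap in *.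
    eapply filter_imp; [|exact HQ]. intros y Hy. apply Hy, Rmax_r.
  - apply HPcont, Rmax_r.
Qed.

Lemma ex_RInt_P_ext (a b : R) : ex_RInt P_ext a b.
Proof. apply (@ex_RInt_continuous R_CompleteNormedModule); intros; apply P_ext_continuous. Qed.

Lemma V_RInt_P_ext (q : R) : 0 <= q -> V P q = RInt P_ext 0 q.
Proof.
  intros Hq. apply RInt_ext; intros y Hy.
  rewrite Rmin_left in Hy by lra. unfold P_ext. now rewrite Rmax_left by lra.
Qed.

Lemma V_sub (a b : R) : 0 <= a -> 0 <= b -> V P b - V P a = RInt P_ext a b.
Proof.
  intros Ha Hb. rewrite !V_RInt_P_ext by assumption.
  rewrite <- (RInt_Chasles P_ext 0 a b) by apply ex_RInt_P_ext.
  unfold plus; simpl; ring.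
Qed.

Definition consumer_surplus (q : R) : R := V P q - q * P q.

Lemma quantity_floor_lt (c qhat qm : R) :
  0 < c -> is_quantity_floor P c qhat -> 0 < qm -> c < consumer_surplus qm -> qhat < qm.
Proof.
  intros Hc [_ [_ Huniq]] Hqm Hcs.
  set (K y := RInt P_ext 0 y - y * P_ext y).
  assert (HK : forall y, continuous K y).
  { intros y. apply (continuous_minus (V := R_NormedModule)).
    - apply (continuous_RInt_1 P_ext 0 y).
      apply filter_forall; intros z. apply (@RInt_correct R_CompleteNormedModule), ex_RInt_P_ext.
    - apply (continuous_mult (K := R_AbsRing)); [apply continuous_id | apply P_ext_continuous]. }
  assert (HKq : K qm = consumer_surplus qm).
  { unfold K, consumer_surplus. rewrite <- V_RInt_P_ext by lra.
    unfold P_ext; now rewrite Rmax_left by lra. }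
  assert (HK0 : K 0 = 0).
  { unfold K. rewrite RInt_point. unfold zero; simpl; ring. }
  destruct (IVT_gen_consistent K 0 qm c HK) as [z [Hz HKz]].
  { rewrite HK0, HKq, Rmin_left, Rmax_right; lra. }
  rewrite Rmin_left, Rmax_right in Hz by lra.
  assert (Hz0 : 0 < z) by (destruct (Req_dec z 0) as [->|]; lra).
  assert (Hzqm : z < qm) by (destruct (Req_dec z qm) as [->|]; lra).
  rewrite <- (Huniq z); [lra | lra |].
  unfold K in HKz. rewrite <- V_RInt_P_ext in HKz by lra.
  unfold P_ext in HKz; rewrite Rmax_left in HKz; lra.
Qed.

Variable qbar : R.
Hypothesis HPdec : forall x y, 0 <= x -> x < y -> y <= qbar -> P y < P x.

Lemma V_sub_bounds (a b : R) : 0 <= a -> a < b -> b <= qbar ->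
  (b - a) * P b < V P b - V P a < (b - a) * P a.
Proof.
  intros Ha Hab Hb. rewrite V_sub by lra.
  assert (Hconst : forall k, (b - a) * k = RInt (fun _ => k) a b).
  { intros k. rewrite RInt_const. reflexivity. }
  rewrite !Hconst. split; apply RInt_lt; auto;
    try (intros; apply continuous_const); try (intros; apply P_ext_continuous);
    intros y Hy; unfold P_ext; rewrite Rmax_left by lra; apply HPdec; lra.
Qed.

Lemma consumer_surplus_increasing (a b : R) : 0 <= a -> a < b -> b <= qbar ->
  consumer_surplus a < consumer_surplus b.
Proof.
  intros Ha Hab Hb. unfold consumer_surplus.
  destruct (V_sub_bounds a b Ha Hab Hb) as [HV _].
  assert (a * P b < a * P a \/ a = 0).
  { destruct (Req_dec a 0); [right | left; apply Rmult_lt_compat_l, HPdec]; lra. }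
  nra.
Qed.

End ValueFunction.

(* The surplus-maximizing lottery [(floor_prob, floor_quantity)] with expected quantity [x]. *)
Definition floor_prob (qhat x : R) : R :=
  if Rle_dec x 0 then 0 else if Rlt_dec x qhat then x / qhat else 1.

Definition floor_quantity (qhat x : R) : R :=
  if Rle_dec x 0 then 0 else if Rlt_dec x qhat then qhat else x.

Section FloorLottery.

Variable qhat : R.
Hypothesis Hqhat : 0 < qhat.

Lemma floor_lottery_nonpos (x : R) : x <= 0 ->
  floor_quantity qhat x = 0 /\ floor_prob qhat x = 0.
Proof. intros Hx. unfold floor_quantity, floor_prob. now destruct (Rle_dec x 0). Qed.

Lemma floor_lottery_below (x : R) : 0 < x < qhat ->
  floor_quantity qhat x = qhat /\ 0 < floor_prob qhat x < 1.
Proof.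
  intros Hx. unfold floor_quantity, floor_prob.
  destruct (Rle_dec x 0); [lra|]. destruct (Rlt_dec x qhat); [|lra].
  split; [reflexivity|]. split.
  - apply Rdiv_lt_0_compat; lra.
  - apply Rlt_div_l; lra.
Qed.

Lemma floor_lottery_above (x : R) : qhat <= x ->
  floor_quantity qhat x = x /\ floor_prob qhat x = 1.
Proof.
  intros Hx. unfold floor_quantity, floor_prob.
  destruct (Rle_dec x 0); [lra|]. destruct (Rlt_dec x qhat); [lra|]. easy.
Qed.

Lemma floor_quantity_ge (x : R) : 0 < x -> x <= floor_quantity qhat x.
Proof.
  intros Hx. destruct (Rlt_le_dec x qhat).
  - rewrite (proj1 (floor_lottery_below x ltac:(lra))); lra.
  - rewrite (proj1 (floor_lottery_above x ltac:(lra))); lra.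
Qed.

Lemma floor_prob_eq (x : R) : 0 < x -> floor_prob qhat x = x / floor_quantity qhat x.
Proof.
  intros Hx. unfold floor_quantity, floor_prob.
  destruct (Rle_dec x 0); [lra|]. destruct (Rlt_dec x qhat); [reflexivity|].
  field; lra.
Qed.

Lemma floor_lottery_mean (x : R) : 0 <= x -> floor_quantity qhat x * floor_prob qhat x = x.
Proof.
  intros Hx. unfold floor_quantity, floor_prob.
  destruct (Rle_dec x 0); [lra|]. destruct (Rlt_dec x qhat); [field|]; lra.
Qed.

Lemma floor_lottery_mechanism (qbar x : R) : qhat <= qbar -> 0 <= x <= qbar ->
  0 <= floor_prob qhat x <= 1 /\ 0 <= floor_quantity qhat x <= qbar /\
  (floor_quantity qhat x = 0 <-> floor_prob qhat x = 0).
Proof.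
  intros Hqbar Hx. destruct (Rle_lt_dec x 0) as [H0|H0].
  - destruct (floor_lottery_nonpos x H0) as [-> ->]. repeat split; lra.
  - destruct (Rlt_le_dec x qhat) as [H1|H1].
    + destruct (floor_lottery_below x ltac:(lra)) as [-> Hp]. repeat split; lra.
    + destruct (floor_lottery_above x H1) as [-> ->]. repeat split; lra.
Qed.

Lemma floor_lottery_unique (r q : R) : 0 <= r -> 0 <= q -> (q = 0 <-> r = 0) ->
  q = floor_quantity qhat (q * r) -> r = floor_prob qhat (q * r).
Proof.
  intros Hr Hq0 Hqr Hq. destruct (Req_dec q 0) as [Hqz|Hqz].
  - rewrite (proj1 Hqr Hqz), Rmult_0_r.
    now rewrite (proj2 (floor_lottery_nonpos 0 (Rle_refl 0))).
  - apply (Rmult_eq_reg_l q); [|exact Hqz].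
    rewrite Hq at 2. rewrite floor_lottery_mean; [reflexivity | nra].
Qed.

End FloorLottery.

Definition avg_net_value (P : R -> R) (c q : R) : R := (V P q - c) / q.

Section AverageNetValue.

Variables (P : R -> R) (c qbar qhat : R).
Hypothesis HPcont : forall x, 0 <= x ->
  filterlim P (within (fun y => 0 <= y) (locally x)) (locally (P x)).
Hypothesis HPdec : forall x y, 0 <= x -> x < y -> y <= qbar -> P y < P x.
Hypothesis Hqhat : 0 < qhat <= qbar.
Hypothesis Hfloor : consumer_surplus P qhat = c.

Lemma avg_net_value_increasing (a b : R) : 0 < a -> a < b -> b <= qhat ->
  avg_net_value P c a < avg_net_value P c b.
Proof.
  intros Ha Hab Hb.
  destruct (V_sub_bounds P HPcont qbar HPdec a b) as [HV _]; try lra.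
  assert (Hcs : consumer_surplus P b <= c).
  { destruct (Req_dec b qhat) as [->|]; [lra|].
    pose proof (consumer_surplus_increasing P HPcont qbar HPdec b qhat); lra. }
  unfold consumer_surplus in Hcs. unfold avg_net_value.
  assert (E : (V P b - c) / b - (V P a - c) / a
              = (b * (V P b - V P a) - (b - a) * (V P b - c)) / (a * b))
    by (field; lra).
  enough (0 < (b * (V P b - V P a) - (b - a) * (V P b - c)) / (a * b)) by lra.
  apply Rdiv_lt_0_compat; nra.
Qed.

Lemma avg_net_value_decreasing (a b : R) : qhat <= a -> a < b -> b <= qbar ->
  avg_net_value P c b < avg_net_value P c a.
Proof.
  intros Ha Hab Hb.
  destruct (V_sub_bounds P HPcont qbar HPdec a b) as [_ HV]; try lra.
  assert (Hcs : c <= consumer_surplus P a).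
  { destruct (Req_dec a qhat) as [->|]; [lra|].
    pose proof (consumer_surplus_increasing P HPcont qbar HPdec qhat a); lra. }
  unfold consumer_surplus in Hcs. unfold avg_net_value.
  assert (E : (V P a - c) / a - (V P b - c) / b
              = ((b - a) * (V P a - c) - a * (V P b - V P a)) / (a * b))
    by (field; lra).
  enough (0 < ((b - a) * (V P a - c) - a * (V P b - V P a)) / (a * b)) by lra.
  apply Rdiv_lt_0_compat; nra.
Qed.

Lemma avg_net_value_lt_floor_quantity (x q : R) : 0 < x -> x <= q -> q <= qbar ->
  q <> floor_quantity qhat x ->
  avg_net_value P c q < avg_net_value P c (floor_quantity qhat x).
Proof.
  intros Hx Hxq Hq Hne. destruct (Rlt_le_dec x qhat) as [Hlt|Hge].
  - rewrite (proj1 (floor_lottery_below qhat (proj1 Hqhat) x ltac:(lra))) in *.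
    destruct (Rlt_le_dec q qhat).
    + apply avg_net_value_increasing; lra.
    + apply avg_net_value_decreasing; lra.
  - rewrite (proj1 (floor_lottery_above qhat (proj1 Hqhat) x Hge)) in *.
    apply avg_net_value_decreasing; lra.
Qed.

Lemma TS_lottery (th x q : R) : 0 < q ->
  x / q * TS P c th q = x * avg_net_value P c q - th * x.
Proof.
  intros Hq. unfold TS, avg_net_value.
  destruct (Rle_dec q 0); [lra|]. field; lra.
Qed.

(* By [TS_lottery], once the expected quantity [q r] is fixed only the average net value of
   [q] matters. *)
Lemma floor_lottery_surplus (th r q : R) :
  0 <= r <= 1 -> 0 <= q <= qbar -> (q = 0 <-> r = 0) ->
  r * TS P c th q <= floor_prob qhat (q * r) * TS P c th (floor_quantity qhat (q * r)) /\
  (q <> floor_quantity qhat (q * r) ->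
   r * TS P c th q < floor_prob qhat (q * r) * TS P c th (floor_quantity qhat (q * r))).
Proof.
  intros Hr Hq Hqr. destruct (Req_dec r 0) as [Hr0|Hr0].
  - rewrite Hr0, (proj2 Hqr Hr0), Rmult_0_r.
    destruct (floor_lottery_nonpos qhat 0 (Rle_refl 0)) as [-> ->].
    split; [lra | now intros []].
  - assert (Hq0 : 0 < q) by (destruct (Req_dec q 0); [tauto | lra]).
    set (x := q * r).
    assert (Hx : 0 < x) by (unfold x; nra).
    assert (Hfq := floor_quantity_ge qhat (proj1 Hqhat) x Hx).
    assert (Hold : r * TS P c th q = x * avg_net_value P c q - th * x).
    { rewrite <- TS_lottery by lra. unfold x. field; lra. }
    assert (Hnew : floor_prob qhat x * TS P c th (floor_quantity qhat x)
                   = x * avg_net_value P c (floor_quantity qhat x) - th * x).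
    { rewrite floor_prob_eq by lra. apply TS_lottery; lra. }
    rewrite Hold, Hnew.
    assert (Hstrict : q <> floor_quantity qhat x ->
              avg_net_value P c q < avg_net_value P c (floor_quantity qhat x)).
    { apply avg_net_value_lt_floor_quantity; unfold x; nra. }
    split.
    + destruct (Req_dec q (floor_quantity qhat x)) as [<-|Hne]; [lra|].
      specialize (Hstrict Hne); nra.
    + intros Hne. specialize (Hstrict Hne); nra.
Qed.

End AverageNetValue.

Definition floor_normalization (thl thh qhat : R) (r q u r' q' u' : R -> R) : Prop :=
  forall th, inTheta thl thh th ->
    r' th = floor_prob qhat (q th * r th) /\
    q' th = floor_quantity qhat (q th * r th) /\ u' th = u th - u thh.

Section Normalization.

Variables (thl thh qbar qhat : R) (r q u : R -> R).
Hypothesis Hthl : thl <= thh.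
Hypothesis Hqhat : 0 < qhat <= qbar.
Hypothesis Hmech : IC_IR thl thh qbar r q u.

Lemma expected_quantity_bounds (th : R) : inTheta thl thh th -> 0 <= q th * r th <= qbar.
Proof.
  intros Hth. destruct Hmech as [Hm _]. destruct (Hm th Hth) as [Hr [Hq _]]. nra.
Qed.

Lemma expected_quantity_nonincreasing (a b : R) :
  inTheta thl thh a -> inTheta thl thh b -> a <= b -> q b * r b <= q a * r a.
Proof.
  intros Ha Hb Hab. destruct Hmech as [_ [Hic _]].
  pose proof (Hic a b Ha Hb). pose proof (Hic b a Hb Ha).
  destruct (Req_dec a b) as [->|Hne]; [lra|]. nra.
Qed.

Lemma rent_ge_top (th : R) : inTheta thl thh th -> u thh <= u th.
Proof.
  intros Hth. assert (Hthh : inTheta thl thh thh) by (unfold inTheta in *; lra).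
  destruct Hmech as [_ [Hic _]]. pose proof (Hic th thh Hth Hthh).
  pose proof (expected_quantity_bounds thh Hthh). unfold inTheta in Hth. nra.
Qed.

Variables r' q' u' : R -> R.
Hypothesis Hnorm : floor_normalization thl thh qhat r q u r' q' u'.

Lemma floor_normalization_IC_IR : IC_IR thl thh qbar r' q' u'.
Proof.
  split; [|split].
  - intros th Hth. destruct (Hnorm th Hth) as [-> [-> _]].
    apply floor_lottery_mechanism; [lra | lra | now apply expected_quantity_bounds].
  - intros th th' Hth Hth'. destruct Hmech as [_ [Hic _]].
    destruct (Hnorm th Hth) as [_ [_ ->]]. destruct (Hnorm th' Hth') as [-> [-> ->]].
    rewrite Rmult_assoc, floor_lottery_mean by (try lra; now apply expected_quantity_bounds).
    pose proof (Hic th th' Hth Hth'). lra.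
  - intros th Hth. destruct (Hnorm th Hth) as [_ [_ ->]].
    pose proof (rent_ge_top th Hth). lra.
Qed.

Lemma expected_quantity_between (a z b : R) :
  inTheta thl thh a -> inTheta thl thh b -> a <= z <= b ->
  inTheta thl thh z /\ q b * r b <= q z * r z <= q a * r a.
Proof.
  intros Ha Hb Hz. assert (Hz' : inTheta thl thh z) by (unfold inTheta in *; lra).
  split; [exact Hz'|]. split; apply expected_quantity_nonincreasing; tauto.
Qed.

Lemma floor_normalization_floor_randomized : floor_randomized thl thh qbar qhat r' q' u'.
Proof.
  assert (Hthh : inTheta thl thh thh) by (unfold inTheta; lra).
  split; [exact floor_normalization_IC_IR | split].
  { destruct (Hnorm thh Hthh) as [_ [_ ->]]. ring. }
  exists (fun th => inTheta thl thh th /\ qhat <= q th * r th),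
         (fun th => inTheta thl thh th /\ 0 < q th * r th < qhat),
         (fun th => inTheta thl thh th /\ q th * r th <= 0).
  assert (Hordered : forall a b, inTheta thl thh a -> inTheta thl thh b ->
            q a * r a < q b * r b -> b < a).
  { intros a b Ha Hb Hlt. destruct (Rlt_le_dec b a) as [|Hba]; [assumption|].
    pose proof (expected_quantity_nonincreasing a b Ha Hb Hba). lra. }
  refine (conj _ (conj _ (conj _ (conj _ (conj _ (conj _
    (conj _ (conj _ (conj _ (conj _ (conj _ (conj _ _)))))))))))).
  1-3: intros a b z [Ha ?] [Hb ?] Hz;
    destruct (expected_quantity_between a z b Ha Hb Hz); split; [assumption | lra].
  - intros th [[? _]|[[? _]|[? _]]]; assumption.
  - intros th Hth. destruct (Rle_lt_dec (q th * r th) 0); [right; right; tauto|].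
    destruct (Rlt_le_dec (q th * r th) qhat); [right; left | left]; split; (assumption || lra).
  - intros th [[_ ?] [_ ?]]; lra.
  - intros th [[_ ?] [_ ?]]; lra.
  - intros th [[_ ?] [_ ?]]; lra.
  - intros a b [Ha ?] [Hb ?]. apply Hordered; (assumption || lra).
  - intros a b [Ha ?] [Hb ?]. apply Hordered; (assumption || lra).
  - intros th [Hth Hx]; destruct (Hnorm th Hth) as [-> [-> _]].
    destruct (floor_lottery_above qhat (proj1 Hqhat) _ Hx) as [-> ->]. split; lra.
  - intros th [Hth Hx]; destruct (Hnorm th Hth) as [-> [-> _]].
    now destruct (floor_lottery_below qhat (proj1 Hqhat) _ Hx) as [-> ?].
  - intros th [Hth Hx]; destruct (Hnorm th Hth) as [-> [-> _]].
    now destruct (floor_lottery_nonpos qhat _ Hx) as [-> ->].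
Qed.

End Normalization.

Section Domination.

Variables (P : R -> R) (c alpha thl thh qbar qhat : R) (r q u r' q' u' : R -> R).
Hypothesis HPcont : forall x, 0 <= x ->
  filterlim P (within (fun y => 0 <= y) (locally x)) (locally (P x)).
Hypothesis HPdec : forall x y, 0 <= x -> x < y -> y <= qbar -> P y < P x.
Hypothesis Hqhat : 0 < qhat <= qbar.
Hypothesis Hfloor : consumer_surplus P qhat = c.
Hypothesis Halpha : alpha < 1.
Hypothesis Hthl : thl <= thh.
Hypothesis Hmech : IC_IR thl thh qbar r q u.
Hypothesis Hnorm : floor_normalization thl thh qhat r q u r' q' u'.

Lemma floor_normalization_surplus (th : R) : inTheta thl thh th ->
  r th * TS P c th (q th) <= r' th * TS P c th (q' th) /\
  (q th <> q' th -> r th * TS P c th (q th) < r' th * TS P c th (q' th)).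
Proof.
  intros Hth. destruct (Hnorm th Hth) as [-> [-> _]].
  destruct Hmech as [Hm _]. destruct (Hm th Hth) as [Hr [Hq Hqr]].
  now apply (floor_lottery_surplus P c qbar qhat HPcont HPdec Hqhat Hfloor).
Qed.

Lemma floor_normalization_RS_ge (th : R) : inTheta thl thh th ->
  RS P c alpha th r q u <= RS P c alpha th r' q' u'.
Proof.
  intros Hth. assert (Hthh : inTheta thl thh thh) by (unfold inTheta in *; lra).
  destruct (floor_normalization_surplus th Hth) as [Hs _].
  destruct (Hnorm th Hth) as [_ [_ Hu]]. destruct Hmech as [_ [_ Hir]].
  pose proof (Hir thh Hthh). unfold RS. rewrite Hu. nra.
Qed.

(* Either the rent at the top type is positive, and the normalization removes it, or the
   mechanism deviates from its normalization at some type, where the lottery is strictly better. *)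
Lemma floor_normalization_RS_gt : ~ floor_randomized thl thh qbar qhat r q u ->
  exists th, inTheta thl thh th /\ RS P c alpha th r q u < RS P c alpha th r' q' u'.
Proof.
  intros Hnot. assert (Hthh : inTheta thl thh thh) by (unfold inTheta; lra).
  destruct Hmech as [Hm [_ Hir]]. pose proof (Hir thh Hthh) as Hu_top.
  destruct (Rlt_le_dec 0 (u thh)) as [Hpos|Hzero].
  - exists thh. split; [exact Hthh|].
    destruct (floor_normalization_surplus thh Hthh) as [Hs _].
    destruct (Hnorm thh Hthh) as [_ [_ Hu]]. unfold RS. rewrite Hu. nra.
  - destruct (classic (exists th, inTheta thl thh th /\ q th <> q' th))
      as [[th [Hth Hne]] | Hsame].
    + exists th. split; [exact Hth|].
      destruct (floor_normalization_surplus th Hth) as [_ Hs].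
      destruct (Hnorm th Hth) as [_ [_ Hu]]. unfold RS. rewrite Hu.
      specialize (Hs Hne). nra.
    + exfalso. apply Hnot, (floor_normalization_floor_randomized thl thh qbar qhat r q u);
        try assumption.
      intros th Hth. destruct (Hnorm th Hth) as [_ [Hq' _]].
      assert (Hq : q th = q' th) by (apply NNPP; intros Hne; apply Hsame; eauto).
      destruct (Hm th Hth) as [Hr [Hq0 Hqr]].
      rewrite <- Hq', <- Hq. split; [|split; [reflexivity | lra]].
      apply (floor_lottery_unique qhat (proj1 Hqhat)); try tauto. congruence.
Qed.

End Domination.

Theorem theorem1
  (thl thh c alpha qbar qhat : R) (P : R -> R)
  (Hth : 0 < thl < thh)
  (Hc : 0 < c)
  (Halpha : 0 <= alpha < 1)
  (Hqbar : 0 < qbar)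
  (HPnonneg : forall x, 0 <= x -> 0 <= P x)
  (HPcont : forall x, 0 <= x ->
     filterlim P (within (fun y => 0 <= y) (locally x)) (locally (P x)))
  (HPdec : forall x y, 0 <= x -> x < y -> y <= qbar -> P y < P x)
  (HPqbar : P qbar = 0)
  (HA2 : exists qm, 0 < qm < qbar /\ P qm = thh /\ TS P c thh qm > 0)
  (Hqhat : is_quantity_floor P c qhat) :
  forall r q u : R -> R,
    IC_IR thl thh qbar r q u ->
    ~ floor_randomized thl thh qbar qhat r q u ->
    exists r' q' u' : R -> R,
      floor_randomized thl thh qbar qhat r' q' u' /\
      dominates P c alpha thl thh qbar r' q' u' r q u.
Proof.
  intros r q u Hmech Hnot.
  assert (Hqhat_qbar : 0 < qhat <= qbar).
  { destruct HA2 as [qm [Hqm [HPqm HTS]]].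
    assert (c < consumer_surplus P qm).
    { unfold TS in HTS. destruct (Rle_dec qm 0); [lra|].
      unfold consumer_surplus. rewrite HPqm. lra. }
    pose proof (quantity_floor_lt P HPcont c qhat qm Hc Hqhat (proj1 Hqm)).
    destruct Hqhat as [? _]. lra. }
  assert (Hfloor : consumer_surplus P qhat = c) by apply Hqhat.
  set (x th := q th * r th).
  assert (Hnorm : floor_normalization thl thh qhat r q u
            (fun th => floor_prob qhat (x th)) (fun th => floor_quantity qhat (x th))
            (fun th => u th - u thh)) by easy.
  exists (fun th => floor_prob qhat (x th)), (fun th => floor_quantity qhat (x th)),
    (fun th => u th - u thh).
  assert (Hnew := floor_normalization_floor_randomized thl thh qbar qhat r q u
                    ltac:(lra) Hqhat_qbar Hmech _ _ _ Hnorm).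
  split; [exact Hnew|]. split; [apply Hnew|]. split; [exact Hmech|]. split.
  - intros th Hin. apply Rle_ge.
    apply (floor_normalization_RS_ge P c alpha thl thh qbar qhat r q u); (assumption || lra).
  - apply (floor_normalization_RS_gt P c alpha thl thh qbar qhat r q u); (assumption || lra).
Qed.
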